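(* Let $[X,A]$ be a Banach space with an $i$-operator such that $[X,A]\not\simeq[X,-A]$ and $[X,A]\simeq[X\oplus X,A\oplus A]$. Let $\mathfrak C$ consist of all complex operators $[T,A',B']:[U,A']\to[V,B']$ (between arbitrary Banach spaces with an $i$-operator) that factor over $[X,A]$, i.e. $T=RS$ for some bounded linear $S:U\to X$ and $R:X\to V$ with $SA'=AS$ and $RA=B'R$. Then $\mathfrak C$ is a complex operator ideal which is not self conjugate.
   Context: A Banach space with an $i$-operator is a pair $[X,A]$ with $X$ a real Banach space and $A:X\to X$ bounded linear with $A^2=-I_X$ and $\|\alpha x+\beta Ax\|=\|x\|$ whenever $\alpha^2+\beta^2=1$; these are exactly complex Banach spaces, and $[X,-A]$ is the complex conjugate space. A bounded linear $T:X\to Y$ with $TA=BT$ is a complex operator $[T,A,B]:[X,A]\to[Y,B]$; two such spaces are isomorphic ($\simeq$) if there is such a $T$ that is bijective. $A\oplus A$ is the $i$-operator $(x_1,x_2)\mapsto(Ax_1,Ax_2)$ on $X\oplus X$ (e.g. with norm $\|x_1\|+\|x_2\|$). A complex operator ideal (Pietsch) assigns to each pair of such spaces a linear subspace of complex operators between them, containing all finite rank complex operators and stable under composition on either side with bounded complex operators. It is self conjugate if $[T,A,B]\in\mathfrak C$ implies $[T,-A,-B]\in\mathfrak C$ and conversely, i.e. $\{[T,-A,-B]:[T,A,B]\in\mathfrak C\}=\mathfrak C$. *)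

(* Real Banach spaces = completeNormedModType R
   over an arbitrary R : realType. *)
From HB Require Import structures.
From mathcomp Require Import all_boot all_order all_algebra.
From mathcomp Require Import all_classical all_reals all_analysis.
Set Implicit Arguments. Unset Strict Implicit. Unset Printing Implicit Defensive.
Import Order.TTheory GRing.Theory Num.Theory.
Import numFieldNormedType.Exports.
Local Open Scope ring_scope.

Section Defs.
Variable R : realType.

Definition bounded_lin (U V : normedModType R) (f : U -> V) : Prop :=
  (forall (a : R) (x y : U), f (a *: x + y) = a *: f x + f y) /\ continuous f.

Definition is_iop (X : normedModType R) (A : X -> X) : Prop :=
  [/\ bounded_lin A, (forall x, A (A x) = - x) &
      (forall (a b : R) (x : X), a ^+ 2 + b ^+ 2 = 1 -> `|a *: x + b *: A x| = `|x|)].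

Definition opp_op (X : normedModType R) (A : X -> X) : X -> X := fun x => - A x.

Definition cplx_op (U V : normedModType R) (A : U -> U) (B : V -> V) (T : U -> V) : Prop :=
  bounded_lin T /\ forall x, T (A x) = B (T x).

Definition cplx_iso (U V : normedModType R) (A : U -> U) (B : V -> V) : Prop :=
  exists T : U -> V, cplx_op A B T /\ bijective T.

(* A (+) A on X (+) X (product space, with the max norm, equivalent to the sum norm) *)
Definition op_sum (X : normedModType R) (A : X -> X) : (X * X)%type -> (X * X)%type :=
  fun p => (A p.1, A p.2).

Definition finite_rank (U V : normedModType R) (T : U -> V) : Prop :=
  exists (n : nat) (v : 'I_n -> V),
    forall x, exists c : 'I_n -> R, T x = \sum_(i < n) c i *: v i.

Definition op_class :=
  forall (U V : completeNormedModType R), (U -> U) -> (V -> V) -> (U -> V) -> Prop.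

Definition is_cplx_op_ideal (C : op_class) : Prop :=
  (forall (U V : completeNormedModType R) (A : U -> U) (B : V -> V) (T : U -> V),
      C U V A B T -> [/\ is_iop A, is_iop B & cplx_op A B T]) /\
  (forall (U V : completeNormedModType R) (A : U -> U) (B : V -> V),
      is_iop A -> is_iop B ->
      [/\ C U V A B (fun _ => 0),
          (forall T1 T2, C U V A B T1 -> C U V A B T2 ->
                         C U V A B (fun x => T1 x + T2 x)) &
          (* multiplication by the complex scalar a + i b *)
          (forall (a b : R) T, C U V A B T ->
                         C U V A B (fun x => a *: T x + b *: B (T x)))]) /\
  (forall (U V : completeNormedModType R) (A : U -> U) (B : V -> V) (T : U -> V),
      is_iop A -> is_iop B -> cplx_op A B T -> finite_rank T -> C U V A B T) /\
  (forall (U0 U V V0 : completeNormedModType R) (A0 : U0 -> U0) (A : U -> U)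
          (B : V -> V) (B0 : V0 -> V0) (S : U0 -> U) (T : U -> V) (Q : V -> V0),
      is_iop A0 -> is_iop B0 -> cplx_op A0 A S -> C U V A B T -> cplx_op B B0 Q ->
      C U0 V0 A0 B0 (Q \o T \o S)).

Definition self_conjugate (C : op_class) : Prop :=
  forall (U V : completeNormedModType R) (A : U -> U) (B : V -> V) (T : U -> V),
    C U V A B T <-> C U V (opp_op A) (opp_op B) T.

Definition factor_class (X : completeNormedModType R) (A : X -> X) : op_class :=
  fun U V A' B' T =>
    [/\ is_iop A', is_iop B' &
      exists (S : U -> X) (Q : X -> V),
        [/\ bounded_lin S, bounded_lin Q, (forall u, S (A' u) = A (S u)),
            (forall x, Q (A x) = B' (Q x)) & T = Q \o S]].

End Defs.

(* Sums: since [X,A] ~ [X (+) X, A (+) A], two factorizations through [X,A]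
   merge into one through [X (+) X]; the inverse of that isomorphism is bounded
   by the open mapping theorem.  Finite rank: a complex operator of finite rank
   is a sum of complex rank-one operators, and each of these factors through
   the complex line spanned by any [x0 <> 0], using a real functional [g] with
   [g x0 = 1] and [g (A x0) = 0] (Hahn-Banach).  Not self conjugate: the identity
   of [X] factors through [X,A]; under self-conjugacy it would factor as
   [X,-A] -> [X,A] -> [X,-A], making [X,-A] complemented in [X,A], and since
   [X,A] ~ [X,A] (+) [X,A], Pelczynski's decomposition method would give
   [X,A] ~ [X,-A]. *)

From HB Require Import structures.
From mathcomp Require Import all_boot all_order all_algebra.
From mathcomp Require Import all_classical all_reals all_analysis.
From mathcomp Require Import ring lra.
Set Implicit Arguments. Unset Strict Implicit. Unset Printing Implicit Defensive.
Import Order.TTheory GRing.Theory Num.Theory.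
Import numFieldNormedType.Exports.
Local Open Scope ring_scope.
Local Open Scope classical_set_scope.

Section linear_fun.
Variables (R : pzRingType) (U V : lmodType R) (f : U -> V).
Hypothesis lf : linear f.

Let F : {linear U -> V} := HB.pack f (GRing.isLinear.Build R U V *:%R f lf).

Lemma lin0 : f 0 = 0. Proof. exact: linear0 F. Qed.
Lemma linD x y : f (x + y) = f x + f y. Proof. exact: (raddfD F x y). Qed.
Lemma linN x : f (- x) = - f x. Proof. exact: (raddfN F x). Qed.
Lemma linB x y : f (x - y) = f x - f y. Proof. exact: (raddfB F x y). Qed.
Lemma linZ a x : f (a *: x) = a *: f x. Proof. exact: (linearZZ F a x). Qed.
Lemma lin_sum n (G : 'I_n -> U) : f (\sum_(i < n) G i) = \sum_(i < n) f (G i).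
Proof. exact: (raddf_sum F). Qed.

End linear_fun.

Section bounded_lin.
Variable R : realType.
Implicit Types U V W : normedModType R.

Lemma linear_le_norm_continuous U V (f : U -> V) (k : R) :
  linear f -> (forall x, `|f x| <= k * `|x|) -> continuous f.
Proof.
move=> lf fk.
pose F : {linear U -> V} := HB.pack f (GRing.isLinear.Build _ _ _ _ _ lf).
apply: (@bounded_linear_continuous _ _ _ F); apply/linear_boundedP.
near=> r => x; apply: (le_trans (fk x)); exact: ler_wpM2r.
Unshelve. all: by end_near. Qed.

Lemma bounded_lin_id U : bounded_lin (@id U).
Proof. by split => // x; exact: cvg_id. Qed.

Lemma bounded_lin0 U V : bounded_lin (fun _ : U => (0 : V)).
Proof. by split; [move=> a x y; rewrite scaler0 addr0 | exact: cst_continuous]. Qed.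

Lemma bounded_lin_comp U V W (f : U -> V) (g : V -> W) :
  bounded_lin f -> bounded_lin g -> bounded_lin (g \o f).
Proof.
move=> [lf cf] [lg cg]; split; first by move=> a x y /=; rewrite lf lg.
by move=> x; apply: continuous_comp; [exact: cf | exact: cg].
Qed.

Lemma bounded_linD U V (f g : U -> V) :
  bounded_lin f -> bounded_lin g -> bounded_lin (fun x => f x + g x).
Proof.
move=> [lf cf] [lg cg]; split; last by move=> x; apply: continuousD; [exact: cf|exact: cg].
by move=> a x y; rewrite lf lg scalerDr addrACA.
Qed.

Lemma bounded_linB U V (f g : U -> V) :
  bounded_lin f -> bounded_lin g -> bounded_lin (fun x => f x - g x).
Proof.
move=> [lf cf] [lg cg]; split; last by move=> x; apply: continuousB; [exact: cf|exact: cg].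
by move=> a x y; rewrite lf lg scalerBr opprD addrACA.
Qed.

Lemma bounded_linZl U V (c : R) (f : U -> V) :
  bounded_lin f -> bounded_lin (fun x => c *: f x).
Proof.
move=> [lf cf]; split; last by move=> x; apply: continuousZl_tmp; exact: cf.
by move=> a x y; rewrite lf scalerDr !scalerA mulrC.
Qed.

Lemma bounded_linZr U V (f : U -> R) (v : V) :
  bounded_lin f -> bounded_lin (fun x => f x *: v).
Proof.
move=> [lf cf]; split; last by move=> x; apply: continuousZr_tmp; exact: cf.
by move=> a x y; rewrite lf scalerDl -scalerA.
Qed.

Lemma bounded_lin_fst U V : bounded_lin (@fst U V).
Proof. by split => // -[x y]; exact: cvg_fst. Qed.

Lemma bounded_lin_snd U V : bounded_lin (@snd U V).
Proof. by split => // -[x y]; exact: cvg_snd. Qed.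

Lemma bounded_lin_pair U V W (f : U -> V) (g : U -> W) :
  bounded_lin f -> bounded_lin g -> bounded_lin (fun x => (f x, g x)).
Proof.
move=> [lf cf] [lg cg]; split; last by move=> x; apply: cvg_pair; [exact: cf|exact: cg].
by move=> a x y; rewrite lf lg.
Qed.

Lemma bounded_lin_sum U V n (F : 'I_n -> U -> V) :
  (forall i, bounded_lin (F i)) -> bounded_lin (fun x => \sum_(i < n) F i x).
Proof.
elim: n F => [|n IH] F bF; first by under eq_fun do rewrite big_ord0; exact: bounded_lin0.
under eq_fun do rewrite big_ord_recl.
by apply: bounded_linD; [exact: bF | exact: (IH (fun i => F (lift ord0 i)))].
Qed.

End bounded_lin.

Section hahn_banach.
Variables (R : realType) (V : normedModType R).

Definition norm_dominated_graph (G : set (V * R)) : Prop :=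
  [/\ G (0, 0),
      (forall p q, G p -> G q -> G (p.1 + q.1, p.2 + q.2)),
      (forall (t : R) p, G p -> G (t *: p.1, t * p.2)) &
      (forall p, G p -> p.2 <= `|p.1|)].

Lemma norm_dominated_graph_fun G x a b :
  norm_dominated_graph G -> G (x, a) -> G (x, b) -> a = b.
Proof.
move=> [_ Gadd Gsc Gle] Ga Gb.
have := Gle _ (Gadd _ _ Ga (Gsc (-1) _ Gb)); have := Gle _ (Gadd _ _ Gb (Gsc (-1) _ Ga)).
rewrite /= scaleN1r subrr normr0 !mulN1r !subr_le0 => ba ab.
by apply/eqP; rewrite eq_le ab ba.
Qed.

(* The value [r] at [y] must satisfy
   [a - `|x - y| <= r <= `|x' + y| - a'] for all [(x, a), (x', a')] in [G];
   such an [r] exists by the triangle inequality, and we take the sup of the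
   lower bounds. *)
Lemma norm_dominated_graph_extend G y :
  norm_dominated_graph G -> ~ (exists a, G (y, a)) ->
  exists G', [/\ norm_dominated_graph G', G `<=` G' & exists r, G' (y, r)].
Proof.
move=> [G0 Gadd Gsc Gle] Gy.
pose L := [set p.2 - `|p.1 - y| | p in G].
have Lle p q : G p -> G q -> p.2 - `|p.1 - y| <= `|q.1 + y| - q.2.
  move=> Gp Gq; have := Gle _ (Gadd _ _ Gp Gq) => /=.
  have : `|p.1 + q.1| <= `|p.1 - y| + `|q.1 + y|.
    have -> : p.1 + q.1 = (p.1 - y) + (q.1 + y) by rewrite addrACA addNr addr0.
    exact: ler_normD.
  lra.
have Lub q : G q -> ubound L (`|q.1 + y| - q.2) by move=> Gq _ [p Gp <-]; exact: Lle.
pose r := sup L.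
have rU q : G q -> r <= `|q.1 + y| - q.2.
  by move=> Gq; apply: ge_sup (Lub _ Gq); exists (0 - `|0 - y|), (0, 0).
have rL p : G p -> p.2 - `|p.1 - y| <= r.
  by move=> Gp; apply: ub_le_sup; [exists (`|0 + y| - 0); exact: (Lub (0, 0)) | exists p].
pose G' := [set p | exists x a t, G (x, a) /\ p = (x + t *: y, a + t * r)].
exists G'; split; first split.
- by exists 0, 0, 0; rewrite scale0r mul0r !addr0.
- move=> _ _ [x [a [t [Gxa ->]]]] [x' [a' [t' [Gxa' ->]]]] /=.
  exists (x + x'), (a + a'), (t + t'); split; first exact: (Gadd _ _ Gxa Gxa').
  by rewrite scalerDl mulrDl; congr (_, _); exact: addrACA.
- move=> s _ [x [a [t [Gxa ->]]]] /=.
  exists (s *: x), (s * a), (s * t); split; first exact: (Gsc s _ Gxa).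
  by rewrite scalerDr mulrDr scalerA mulrA.
- move=> _ [x [a [t [Gxa ->]]]] /=.
  have [t0|t0|->] := ltgtP t 0; last by rewrite mul0r scale0r !addr0; exact: (Gle _ Gxa).
  + have tn : 0 < - t by rewrite oppr_gt0.
    have -> : `|x + t *: y| = - t * `|(- t)^-1 *: x - y|.
      rewrite -[X in X * _](gtr0_norm tn) -normrZ scalerBr scalerA mulfV ?gt_eqF //.
      by rewrite scale1r scaleNr opprK.
    have := ler_wpM2l (ltW tn) (rL _ (Gsc (- t)^-1 _ Gxa)).
    rewrite /= mulrBr mulrA mulfV ?gt_eqF // mul1r; lra.
  + have -> : `|x + t *: y| = t * `|t^-1 *: x + y|.
      rewrite -[X in _ = X * _](gtr0_norm t0) -normrZ scalerDr scalerA.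
      by rewrite mulfV ?gt_eqF // scale1r.
    have := ler_wpM2l (ltW t0) (rU _ (Gsc t^-1 _ Gxa)).
    rewrite /= mulrBr mulrA mulfV ?gt_eqF // mul1r; lra.
- by move=> [x a] Gxa; exists x, a, 0; rewrite scale0r mul0r !addr0.
- by exists r, 0, 0, 1; split => //; rewrite add0r scale1r add0r mul1r.
Qed.

Lemma total_norm_dominated_graph G0 : norm_dominated_graph G0 ->
  exists G, [/\ norm_dominated_graph G, G0 `<=` G & forall x, exists a, G (x, a)].
Proof.
move=> gG0.
(* [set0] is admitted since it is the union of the empty chain. *)
pose P G := G = set0 \/ (norm_dominated_graph G /\ G0 `<=` G).
have [G [PG Gmax]] : exists G, P G /\ (forall H, G `<` H -> ~ P H).
  apply: Zorn_bigcup => F FP Ftot.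
  have [[H FH [p Hp]]|nF] := pselect (exists2 H, F H & H !=set0); last first.
    left; apply/seteqP; split => // p [H FH Hp]; apply: nF; exists H => //.
    by exists p.
  have goodF H' q : F H' -> H' q -> norm_dominated_graph H'.
    by move=> FH' H'q; case: (FP _ FH') => [eH'|[]//]; move: H'q; rewrite eH'.
  right; split; last first.
    by case: (FP _ FH) => [eH|[_ G0H] q /G0H]; [move: Hp; rewrite eH | exists H].
  have [H0 _ _ _] := goodF _ _ FH Hp.
  split.
  - by exists H.
  - move=> q q' [H1 FH1 H1q] [H2 FH2 H2q'].
    have [H12|H21] := Ftot _ _ FH1 FH2.
    + by exists H2 => //; have [_ + _ _] := goodF _ _ FH2 H2q'; apply; [apply: H12|].
    + by exists H1 => //; have [_ + _ _] := goodF _ _ FH1 H1q; apply; [|apply: H21].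
  - move=> t q [H1 FH1 H1q]; exists H1 => //.
    by have [_ _ + _] := goodF _ _ FH1 H1q; apply.
  - by move=> q [H1 FH1 H1q]; have [_ _ _] := goodF _ _ FH1 H1q; apply.
have [gG G0G] : norm_dominated_graph G /\ G0 `<=` G.
  case: PG => [eG|//]; exfalso; apply: (Gmax G0); last by right; split.
  by rewrite eG; split => //; case: gG0 => G00 _ _ _ /(_ (0, 0) G00).
exists G; split => // x; apply: contrapT => nx.
have [G' [gG' GG' [r G'x]]] := norm_dominated_graph_extend gG nx.
apply: (Gmax G'); last by right; split => //; exact: subset_trans GG'.
by split => // /(_ _ G'x) Gx; apply: nx; exists r.
Qed.

Theorem hahn_banach G0 : norm_dominated_graph G0 -> exists f : V -> R,
  [/\ bounded_lin f, (forall x, `|f x| <= `|x|) & forall p, G0 p -> f p.1 = p.2].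
Proof.
move=> gG0; have [G [gG G0G Gtot]] := total_norm_dominated_graph gG0.
have [f Gf] := choice Gtot; have [_ Gadd Gsc Gle] := gG.
have lf : linear f.
  move=> a x y; apply: (norm_dominated_graph_fun gG (Gf _)).
  exact: Gadd _ _ (Gsc a _ (Gf x)) (Gf y).
have fle x : `|f x| <= `|x|.
  have := Gle _ (Gf (- x)); have := Gle _ (Gf x).
  by rewrite /= normrN (linN lf) ler_norml; lra.
exists f; split => //.
  by split => //; apply: (linear_le_norm_continuous (k := 1)) => // x; rewrite mul1r.
by move=> [x a] /G0G Gxa; apply: (norm_dominated_graph_fun gG (Gf x) Gxa).
Qed.

Lemma separating_functional (S : set V) (v : V) (rho : R) :
  S 0 -> (forall a x y, S x -> S y -> S (a *: x + y)) -> 0 < rho ->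
  (forall m, S m -> rho <= `|v - m|) ->
  exists h : V -> R, [/\ bounded_lin h, h v = 1 & forall m, S m -> h m = 0].
Proof.
move=> S0 SD rho0 Sv.
have SZ a x : S x -> S (a *: x) by move=> Sx; rewrite -[_ *: _]addr0; exact: SD.
pose G0 := [set p : V * R | exists m t, S m /\ p = (m + t *: v, rho * t)].
have gG0 : norm_dominated_graph G0.
  split.
  - by exists 0, 0; rewrite scale0r addr0 mulr0.
  - move=> _ _ [m [t [Sm ->]]] [m' [t' [Sm' ->]]] /=.
    exists (m + m'), (t + t'); split; last by rewrite scalerDl mulrDr addrACA.
    by rewrite -[m]scale1r; exact: SD.
  - move=> s _ [m [t [Sm ->]]] /=; exists (s *: m), (s * t); split; first exact: SZ.
    by rewrite scalerDr scalerA mulrCA.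
  - move=> _ [m [t [Sm ->]]] /=.
    have [->|t0] := eqVneq t 0; first by rewrite mulr0 scale0r addr0.
    have -> : m + t *: v = t *: (v - (- t^-1 *: m)).
      by rewrite scalerBr scalerA mulrN mulfV // scaleN1r opprK addrC.
    rewrite normrZ (le_trans (ler_norm _)) // normrM [`|rho|]gtr0_norm // mulrC.
    by rewrite ler_wpM2l //; apply/Sv/SZ.
have [f [bf _ fG0]] := hahn_banach gG0.
have fS m t : S m -> f (m + t *: v) = rho * t by move=> Sm; apply: (fG0 (_, _)); exists m, t.
exists (fun x => rho^-1 *: f x); split; first exact: bounded_linZl.
- have := fS 0 1 S0; rewrite add0r scale1r mulr1 => ->.
  by rewrite /GRing.scale /= mulVf ?gt_eqF.
- by move=> m Sm; have := fS m 0 Sm; rewrite scale0r addr0 mulr0 => ->; rewrite scaler0.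
Qed.

End hahn_banach.

Section open_mapping.
Variable R : realType.

Lemma surj_closure_image_ball (E : normedModType R) (F : completeNormedModType R)
    (f : E -> F) :
  (forall y, exists x, f x = y) ->
  exists n y0 r, 0 < r /\ forall u, `|y0 - u| < r -> closure (f @` [set x | `|x| <= n%:R]) u.
Proof.
move=> fsurj; pose O n := ~` closure (f @` [set x | `|x| <= n%:R]).
have [n nd] : exists n, ~ dense (O n).
  apply: contrapT => nd.
  have odO n : open (O n) /\ dense (O n).
    split; first exact/closed_openC/closed_closure.
    by apply: contrapT => dn; apply: nd; exists n.
  have [y [_ Oy]] : (setT `&` \bigcap_i O i) !=set0.
    by apply: (Baire odO); [exists 0 | exact: openT].
  have [x fxy] := fsurj y; rewrite -fxy in Oy.
  apply: (Oy (Num.truncn `|x|).+1 Logic.I); apply: subset_closure; exists x => //.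
  by rewrite /= ltW // truncnS_gt.
apply: contrapT => nball; apply: nd => U [y0 Uy0] oU; apply: contrapT => nUO.
have /nbhs_normP [r r0 Ur] : nbhs y0 U by apply: open_nbhs_nbhs.
apply: nball; exists n, y0, r; split => // u y0u; apply: contrapT => nu.
by apply: nUO; exists u; split => //; apply: Ur.
Qed.

(* Differences of points of [f @` [set x | `|x| <= n%:R]] approximate every
   vector of norm [r / 2]; rescaling handles an arbitrary [y]. *)
Lemma approx_preimage (E F : normedModType R) (f : E -> F) (n : nat) (y0 : F) (r : R) :
  linear f -> 0 < r ->
  (forall u, `|y0 - u| < r -> closure (f @` [set x | `|x| <= n%:R]) u) ->
  forall y, exists x, `|x| <= 4 * n%:R / r * `|y| /\ `|y - f x| <= `|y| / 2.
Proof.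
move=> lf r0 dense_f y.
have approx u e : `|y0 - u| < r -> 0 < e -> exists x, `|x| <= n%:R /\ `|u - f x| < e.
  move=> y0u e0; have [_ [[x nx <-] fxu]] := dense_f u y0u _ (nbhsx_ballx u e e0).
  by exists x; rewrite -ball_normE in fxu.
have [->|y0n] := eqVneq y 0.
  by exists 0; rewrite (lin0 lf) subr0 !normr0 mulr0 mul0r.
have ny : 0 < `|y| by rewrite normr_gt0.
pose t := 2 * `|y| / r; have t0 : 0 < t by rewrite /t divr_gt0 ?mulr_gt0.
pose u := t^-1 *: y.
have nu : `|u| = r / 2.
  by rewrite /u normrZ gtr0_norm ?invr_gt0 // /t invf_div; field; rewrite gt_eqF.
have r8 : 0 < r / 8 by rewrite divr_gt0.
have y0u : `|y0 - (y0 + u)| < r by rewrite opprD addNKr normrN nu; lra.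
have [x1 [nx1 fx1]] := approx (y0 + u) _ y0u r8.
have [x2 [nx2 fx2]] := approx y0 _ (ltac:(by rewrite subrr normr0)) r8.
exists (t *: (x1 - x2)); split.
  have -> : 4 * n%:R / r * `|y| = t * (n%:R + n%:R) by rewrite /t; field; rewrite gt_eqF.
  rewrite normrZ gtr0_norm // ler_pM2l //.
  exact: le_trans (ler_normB _ _) (lerD nx1 nx2).
have -> : y = t *: u by rewrite /u scalerA mulfV ?gt_eqF // scale1r.
rewrite (linZ lf) (linB lf) -scalerBr normrZ gtr0_norm // normrZ gtr0_norm //.
have -> : t * `|u| / 2 = t * (r / 4) by rewrite nu; field.
rewrite ler_pM2l //.
have -> : u - (f x1 - f x2) = (y0 + u - f x1) - (y0 - f x2).
  by rewrite [y0 + u]addrC addrAC addrKA opprK opprB addrA addrAC.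
apply: le_trans (ler_normB _ _) _; lra.
Qed.

(* Iterating the approximation, [x = \sum_k x_k] converges and solves
   [f x = y]: the residuals [y - f (\sum_(i < k) x_i)] halve at each step. *)
Lemma exact_preimage (E : completeNormedModType R) (F : normedModType R) (f : E -> F) (M : R) :
  linear f -> continuous f -> 0 <= M ->
  (forall y, exists x, `|x| <= M * `|y| /\ `|y - f x| <= `|y| / 2) ->
  forall y, exists x, f x = y /\ `|x| <= M * `|y| * 2.
Proof.
move=> lf fc M0 happrox y.
have [h hh] := choice happrox.
pose fix z k := if k is k'.+1 then z k' - f (h (z k')) else y.
pose x k := h (z k).
have zb k : `|z k| <= `|y| * (2^-1) ^+ k.
  elim: k => [|k IH] /=; first by rewrite expr0 mulr1.
  have [_ h2] := hh (z k); apply: (le_trans h2).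
  by rewrite exprSr mulrA ler_wpM2r // ?invr_ge0 ?ler0n.
have xb k : `|x k| <= M * `|y| * (2^-1) ^+ k.
  have [h1 _] := hh (z k); apply: (le_trans h1).
  by rewrite -mulrA ler_wpM2l // zb.
have fs k : f (\sum_(0 <= i < k) x i) = y - z k.
  elim: k => [|k IH]; first by rewrite big_nil (lin0 lf) subrr.
  by rewrite big_nat_recr // (linD lf) IH /= opprD opprK addrA.
have geo0 k : 0 <= geometric (M * `|y|) (2^-1) k.
  by rewrite /= mulr_ge0 ?mulr_ge0 ?exprn_ge0 ?invr_ge0 ?ler0n.
have h12 : `|2^-1 : R| < 1 by rewrite ger0_norm ?invr_ge0 ?ler0n // invf_lt1 ?ltr1n.
have geo := is_cvg_geometric_series (a := M * `|y|) h12.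
have cn : cvgn (series (fun k => `|x k|)) by apply: (series_le_cvg _ geo0 _ geo).
exists (limn (series x)); split.
- have fx := continuous_cvg _ (fc (limn (series x))) (normed_cvg cn).
  have fy : (f \o series x) k @[k --> \oo] --> y.
    apply/cvgrPdist_lt => e e0.
    move: (@cvg_geometric _ `|y| _ h12) => /cvgrPdist_lt/(_ _ e0).
    apply: filterS => k /=; rewrite sub0r normrN => hk.
    rewrite fs opprB addrC subrK; apply: le_lt_trans (zb k) _.
    by apply: le_lt_trans hk; rewrite ler_norm.
  exact: (cvg_unique (@norm_hausdorff _ F) (fx _) fy).
- apply: (le_trans (lim_series_norm cn)).
  apply: (le_trans (lim_series_le cn geo xb)).
  rewrite (cvg_lim _ (cvg_geometric_series (a := M * `|y|) h12)) //.
  by rewrite [X in X - _](splitr 1) div1r addrK invrK.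
Qed.

Theorem bounded_inverse (E F : completeNormedModType R) (f : E -> F) (g : F -> E) :
  bounded_lin f -> cancel f g -> cancel g f -> bounded_lin g.
Proof.
move=> [lf fc] fK gK.
have lg : linear g by move=> a x y; apply: (can_inj fK); rewrite lf !gK.
split => //.
have [n [y0 [r [r0 dense_f]]]] := surj_closure_image_ball (fun y => ex_intro _ (g y) (gK y)).
have M0 : 0 <= 4 * n%:R / r by rewrite divr_ge0 ?mulr_ge0 ?ler0n // ltW.
apply: (linear_le_norm_continuous (k := 4 * n%:R / r * 2)) => // y.
have [x [<- nx]] := exact_preimage lf fc M0 (approx_preimage lf r0 dense_f) y.
by rewrite fK mulrAC.
Qed.

End open_mapping.

Section complete_prod.
Variables (R : realType) (X Y : completeNormedModType R).

HB.instance Definition _ := isPointed.Build (X * Y)%type (0, 0).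

Lemma cauchy_prod_cvg (F : set_system (X * Y)%type) : ProperFilter F -> cauchy F -> cvg F.
Proof.
move=> FF /(@cauchyP R (X * Y)%type F FF) Fc.
have c1 : cvg (fst @ F).
  apply: cauchy_cvg; apply: cauchy_exP => e e0; have [x Fx] := Fc e e0.
  by exists x.1; rewrite /= nbhs_simpl /=; apply: filterS Fx => p [].
have c2 : cvg (snd @ F).
  apply: cauchy_cvg; apply: cauchy_exP => e e0; have [x Fx] := Fc e e0.
  by exists x.2; rewrite /= nbhs_simpl /=; apply: filterS Fx => p [].
apply/cvg_ex; exists (lim (fst @ F), lim (snd @ F)).
have := cvg_pair c1 c2.
have -> : (fun x : X * Y => (x.1, x.2)) = id by apply: funext => -[].
by move=> h; exact: h.
Qed.

HB.instance Definition _ := Uniform_isComplete.Build (X * Y)%type cauchy_prod_cvg.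

End complete_prod.

Section span.
Variables (R : realType) (V : normedModType R).

Definition in_span n (v : 'I_n -> V) (w : V) :=
  exists c : 'I_n -> R, w = \sum_(i < n) c i *: v i.

Lemma in_span0 n (v : 'I_n -> V) : in_span v 0.
Proof. by exists (fun=> 0); rewrite big1 // => i _; exact: scale0r. Qed.

Lemma in_spanD n (v : 'I_n -> V) a w w' :
  in_span v w -> in_span v w' -> in_span v (a *: w + w').
Proof.
move=> [c ->] [c' ->]; exists (fun i => a * c i + c' i).
rewrite scaler_sumr -big_split /=; apply: eq_bigr => i _.
by rewrite scalerDl scalerA.
Qed.

Lemma dist_closed_gt0 (S : set V) v :
  closed S -> ~ S v -> exists2 rho : R, 0 < rho & forall m, S m -> rho <= `|v - m|.
Proof.
move=> cS Sv; have /nbhs_normP [rho rho0 hrho] : nbhs v (~` S).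
  by apply: open_nbhs_nbhs; split => //; exact: closed_openC.
by exists rho => // m Sm; rewrite leNgt; apply/negP => vm; exact: (hrho m vm).
Qed.

Definition span_coordinates n (v : 'I_n -> V) (g : 'I_n -> V -> R) :=
  (forall i, bounded_lin (g i)) /\ forall w, in_span v w -> w = \sum_(i < n) g i w *: v i.

Lemma closed_span n (v : 'I_n -> V) g : span_coordinates v g -> closed (in_span v).
Proof.
move=> [bg gsp].
have -> : in_span v = (fun w => w - \sum_(i < n) g i w *: v i) @^-1` [set 0].
  apply/seteqP; split => w /=; first by move/gsp <-; rewrite subrr.
  by move/eqP; rewrite subr_eq0 => /eqP ->; exists (g^~ w).
have [_ /continuous_closedP] : bounded_lin (fun w => w - \sum_(i < n) g i w *: v i).
  apply/bounded_linB/bounded_lin_sum => [|i]; first exact: bounded_lin_id.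
  exact: bounded_linZr.
by apply; exact/accessible_closed_set1/hausdorff_accessible/norm_hausdorff.
Qed.

(* If [v ord0] lies in the span of the other vectors take [h = 0]; otherwise
   [h] separates [v ord0] from that span, which is closed. *)
Lemma first_coordinate n (v : 'I_n.+1 -> V) :
  closed (in_span (fun i => v (lift ord0 i))) ->
  exists h : V -> R, bounded_lin h /\
    forall w, in_span v w -> in_span (fun i => v (lift ord0 i)) (w - h w *: v ord0).
Proof.
set S := in_span _ => cS.
have Sw w : in_span v w -> exists c m, S m /\ w = c *: v ord0 + m.
  move=> [c ->]; rewrite big_ord_recl.
  by exists (c ord0), (\sum_(i < n) c (lift ord0 i) *: v (lift ord0 i)); split => //; eexists.
have SD a x y : S x -> S y -> S (a *: x + y) by exact: in_spanD.
have [Sv|Sv] := pselect (S (v ord0)).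
  exists (fun=> 0); split => [|w /Sw [c [m [Sm ->]]]]; first exact: bounded_lin0.
  by rewrite scale0r subr0; apply: SD.
have [rho rho0 hrho] := dist_closed_gt0 cS Sv.
have [h [bh hv hS]] := separating_functional (in_span0 _) SD rho0 hrho.
exists h; split => // w /Sw [c [m [Sm ->]]].
by rewrite bh.1 hv hS // addr0 /GRing.scale /= mulr1 addrC addKr.
Qed.

Lemma exists_span_coordinates n (v : 'I_n -> V) : exists g, span_coordinates v g.
Proof.
elim: n v => [|n IH] v.
  by exists (fun _ _ => 0); split => [i|w [c ->]]; [exact: bounded_lin0 | rewrite !big_ord0].
have [g' [bg' g'sp]] := IH (fun i => v (lift ord0 i)).
have [h [bh hsp]] := first_coordinate (closed_span (conj bg' g'sp)).
exists (fun i x => if unlift ord0 i is Some j then g' j (x - h x *: v ord0) else h x).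
split => [i|w vw].
- case: (unlift ord0 i) => [j|//]; apply: bounded_lin_comp (bg' j).
  exact/bounded_linB/bounded_linZr/bh/bounded_lin_id.
- rewrite big_ord_recl unlift_none; under eq_bigr do rewrite liftK.
  by rewrite -(g'sp _ (hsp _ vw)) addrC subrK.
Qed.

End span.

Section iop.
Variables (R : realType) (X : normedModType R) (A : X -> X).
Hypothesis iA : is_iop A.

Lemma iop_bounded_lin : bounded_lin A. Proof. by case: iA. Qed.

Lemma iopAA x : A (A x) = - x. Proof. by case: iA. Qed.

(* Then [x |-> g x - i g (A x)] is a complex functional with value [1] at [x0]. *)
Lemma exists_cplx_functional (x0 : X) : x0 != 0 ->
  exists g : X -> R, [/\ bounded_lin g, g x0 = 1 & g (A x0) = 0].
Proof.
move=> x0n.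
have [f [bf fx0 _]] :
    exists f : X -> R, [/\ bounded_lin f, f x0 = 1 & forall m, m = 0 -> f m = 0].
  apply: (@separating_functional _ _ [set 0] x0 `|x0|) => //.
  - by move=> a _ _ -> ->; rewrite scaler0 addr0.
  - by rewrite normr_gt0.
  - by move=> _ ->; rewrite subr0.
pose b := f (A x0); have b0 : 0 < 1 + b ^+ 2 by rewrite ltr_pwDl ?sqr_ge0.
exists (fun x => (1 + b ^+ 2)^-1 *: (f x + b *: f (A x))); split.
- apply/bounded_linZl/(bounded_linD bf)/bounded_linZl.
  exact: bounded_lin_comp iop_bounded_lin bf.
- by rewrite fx0 -/b /GRing.scale /= -expr2 mulVf ?gt_eqF.
- by rewrite iopAA (linN bf.1) fx0 -/b /GRing.scale /= mulrN1 subrr mulr0.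
Qed.

Lemma exists_nonzero_of_not_cplx_iso_opp :
  ~ cplx_iso A (opp_op A) -> exists x : X, x != 0.
Proof.
move=> niso; apply: contrapT => X0; apply: niso; exists id; split; last by exists id.
have x0 (x : X) : x = 0 by apply: contrapT => nx; apply: X0; exists x; apply/eqP.
by split => [|x]; [exact: bounded_lin_id | rewrite [LHS]x0 [RHS]x0].
Qed.

End iop.

Section factor_class.
Variables (R : realType) (X : completeNormedModType R) (A : X -> X).
Hypothesis iA : is_iop A.
Implicit Types U V : completeNormedModType R.

Lemma factor_class_cplx_op U V (A' : U -> U) (B' : V -> V) (T : U -> V) :
  factor_class A A' B' T -> [/\ is_iop A', is_iop B' & cplx_op A' B' T].
Proof.
move=> [iA' iB' [S [Q [bS bQ SA QA ->]]]]; split => //.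
by split => [|u /=]; [exact: bounded_lin_comp | rewrite SA QA].
Qed.

Lemma factor_class0 U V (A' : U -> U) (B' : V -> V) :
  is_iop A' -> is_iop B' -> factor_class A A' B' (fun _ => 0).
Proof.
move=> iA' iB'; split => //; exists (fun _ => 0), (fun _ => 0).
split => //; [exact: bounded_lin0 | exact: bounded_lin0 | |].
- by move=> u; rewrite (lin0 (iop_bounded_lin iA).1).
- by move=> x; rewrite (lin0 (iop_bounded_lin iB').1).
Qed.

Lemma factor_class_cscale U V (A' : U -> U) (B' : V -> V) (a b : R) (T : U -> V) :
  factor_class A A' B' T -> factor_class A A' B' (fun x => a *: T x + b *: B' (T x)).
Proof.
move=> [iA' iB' [S [Q [bS bQ SA QA ->]]]]; split => //.
have [bB' B'B'] := (iop_bounded_lin iB', iopAA iB').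
exists S, (fun x => a *: Q x + b *: B' (Q x)); split => // [|x].
- by apply: bounded_linD; apply: bounded_linZl => //; exact: bounded_lin_comp bQ bB'.
- by rewrite QA (linD bB'.1) !(linZ bB'.1) !B'B'.
Qed.

Lemma factor_class_comp U0 U V V0 (A0 : U0 -> U0) (A' : U -> U) (B' : V -> V)
    (B0 : V0 -> V0) (S0 : U0 -> U) (T : U -> V) (Q0 : V -> V0) :
  is_iop A0 -> is_iop B0 -> cplx_op A0 A' S0 -> factor_class A A' B' T ->
  cplx_op B' B0 Q0 -> factor_class A A0 B0 (Q0 \o T \o S0).
Proof.
move=> iA0 iB0 [bS0 S0A] [iA' iB' [S [Q [bS bQ SA QA ->]]]] [bQ0 Q0A].
split => //; exists (S \o S0), (Q0 \o Q).
split => // [||u|x] /=; [exact: bounded_lin_comp | exact: bounded_lin_comp | |].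
- by rewrite S0A SA.
- by rewrite QA Q0A.
Qed.

(* This is the complex rank-one operator [u |-> (f u - i f (A' u)) v]. *)
Lemma factor_class_rank_one (x0 : X) (g0 : X -> R) U V (A' : U -> U) (B' : V -> V)
    (f : U -> R) (v : V) :
  bounded_lin g0 -> g0 x0 = 1 -> g0 (A x0) = 0 ->
  is_iop A' -> is_iop B' -> bounded_lin f ->
  factor_class A A' B' (fun u => f u *: v - f (A' u) *: B' v).
Proof.
move=> bg0 g0x0 g0Ax0 iA' iB' bf; split => //.
have [[bA bA'] bB'] := (iop_bounded_lin iA, iop_bounded_lin iA', iop_bounded_lin iB').
have g0S s t : g0 (s *: x0 - t *: A x0) = s.
  by rewrite (linB bg0.1) !(linZ bg0.1) g0x0 g0Ax0 /GRing.scale /= mulr1 mulr0 subr0.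
pose S u := f u *: x0 - f (A' u) *: A x0.
have SA u : S (A' u) = A (S u).
  rewrite /S (iopAA iA') (linN bf.1) (linB bA.1) !(linZ bA.1) (iopAA iA).
  by rewrite scaleNr scalerN !opprK addrC.
exists S, (fun x => g0 x *: v - g0 (A x) *: B' v); split => //.
- by apply: bounded_linB; apply: bounded_linZr => //; exact: bounded_lin_comp bA' bf.
- by apply: bounded_linB; apply: bounded_linZr => //; exact: bounded_lin_comp bA bg0.
- move=> x; rewrite (iopAA iA) (linN bg0.1) (linB bB'.1) !(linZ bB'.1) (iopAA iB').
  by rewrite scaleNr scalerN !opprK addrC.
- apply: funext => u /=; rewrite -SA.
  by congr (_ *: _ - _ *: _); symmetry; exact: g0S.
Qed.

Section sum_iso.
Variables (J : X -> X * X) (K : X * X -> X).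
Hypotheses (bJ : bounded_lin J) (bK : bounded_lin K)
  (JA : forall x, J (A x) = op_sum A (J x)) (JK : cancel J K) (KJ : cancel K J).

Lemma K_op_sum p : K (op_sum A p) = A (K p).
Proof. by apply: (can_inj JK); rewrite KJ JA KJ. Qed.

Lemma factor_classD U V (A' : U -> U) (B' : V -> V) (T1 T2 : U -> V) :
  factor_class A A' B' T1 -> factor_class A A' B' T2 ->
  factor_class A A' B' (fun x => T1 x + T2 x).
Proof.
move=> [iA' iB' [S1 [Q1 [bS1 bQ1 SA1 QA1 ->]]]] [_ _ [S2 [Q2 [bS2 bQ2 SA2 QA2 ->]]]].
split => //; exists (fun u => K (S1 u, S2 u)), (fun x => Q1 (J x).1 + Q2 (J x).2).
split => [||u|x|].
- exact: bounded_lin_comp (bounded_lin_pair bS1 bS2) bK.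
- apply: bounded_linD.
  + exact: bounded_lin_comp (bounded_lin_comp bJ (@bounded_lin_fst _ X X)) bQ1.
  + exact: bounded_lin_comp (bounded_lin_comp bJ (@bounded_lin_snd _ X X)) bQ2.
- by rewrite SA1 SA2; exact: (K_op_sum (S1 u, S2 u)).
- by rewrite JA /= QA1 QA2 (linD (iop_bounded_lin iB').1).
- by apply: funext => u /=; rewrite KJ.
Qed.

Lemma factor_class_sum U V (A' : U -> U) (B' : V -> V) n (F : 'I_n -> U -> V) :
  is_iop A' -> is_iop B' -> (forall i, factor_class A A' B' (F i)) ->
  factor_class A A' B' (fun u => \sum_(i < n) F i u).
Proof.
move=> iA' iB'; elim: n F => [|n IH] F FF.
  by under eq_fun do rewrite big_ord0; exact: factor_class0.
under eq_fun do rewrite big_ord_recl.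
by apply: factor_classD => //; exact: (IH (fun i => F (lift ord0 i))).
Qed.

(* Writing [T u = \sum_i f_i u *: v_i] with continuous coordinates [f_i],
   [T] is half the sum of the complex rank-one operators built from [f_i] and [v_i]. *)
Lemma factor_class_finite_rank U V (A' : U -> U) (B' : V -> V) (T : U -> V) :
  (exists x0 : X, x0 != 0) -> is_iop A' -> is_iop B' -> cplx_op A' B' T ->
  finite_rank T -> factor_class A A' B' T.
Proof.
move=> [x0 x0n] iA' iB' [bT TA] [n [v Tv]].
have [g0 [bg0 g0x0 g0Ax0]] := exists_cplx_functional iA x0n.
have [g [bg gsp]] := exists_span_coordinates v.
have lB' := (iop_bounded_lin iB').1.
have Tg u : T u = \sum_(i < n) g i (T u) *: v i by apply/gsp/Tv.
pose Rk i u := g i (T u) *: v i - g i (T (A' u)) *: B' (v i).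
suff -> : T = fun u => 2^-1 *: (\sum_(i < n) Rk i u) + 0 *: B' (\sum_(i < n) Rk i u).
  apply: factor_class_cscale; apply: factor_class_sum => // i.
  exact: factor_class_rank_one bg0 g0x0 g0Ax0 iA' iB' (bounded_lin_comp bT (bg i)).
apply: funext => u; rewrite scale0r addr0 sumrB -Tg.
under eq_bigr do rewrite -(linZ lB').
rewrite -(lin_sum lB') -Tg TA (iopAA iB') opprK scalerDr -scalerDl.
by rewrite (_ : 2^-1 + 2^-1 = 1) ?scale1r //; lra.
Qed.

Lemma factor_class_is_ideal : (exists x0 : X, x0 != 0) -> is_cplx_op_ideal (factor_class A).
Proof.
move=> X0; split; [|split; [|split]].
- exact: factor_class_cplx_op.
- move=> U V A' B' iA' iB'; split; [exact: factor_class0 | exact: factor_classD |].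
  by move=> a b T; exact: factor_class_cscale.
- by move=> U V A' B' T iA' iB'; exact: factor_class_finite_rank.
- by move=> U0 U V V0 A0 A' B' B0 S T Q iA0 iB0; exact: factor_class_comp.
Qed.

(* Pelczynski's decomposition method.  [al] is an isomorphism
   [X,A] ~ [X,-A] (+) [X,A] with inverse [be]; the same map [be] is also complex
   as a map [X,A] (+) [X,-A] -> [X,-A], so [be \o swap \o al] is the required
   isomorphism (and an involution). *)
Lemma pelczynski (S Q : X -> X) : bounded_lin S -> bounded_lin Q ->
  (forall x, S (opp_op A x) = A (S x)) -> (forall x, Q (A x) = opp_op A (Q x)) ->
  cancel S Q -> cplx_iso A (opp_op A).
Proof.
move=> bS bQ SA' QA QS.
have [[[[lA lS] lQ] lJ] lK] := ((iop_bounded_lin iA).1, bS.1, bQ.1, bJ.1, bK.1).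
have SA y : S (A y) = - A (S y).
  by have := SA' (- y); rewrite /opp_op (linN lA) opprK => ->; rewrite (linN lS) (linN lA).
pose al x := ((J (Q x)).1, S (J (Q x)).2 + (x - S (Q x))).
pose be (p : X * X) := S (K (p.1, Q p.2)) + (p.2 - S (Q p.2)).
pose T x := be ((al x).2, (al x).1).
have beal x : be (al x) = x.
  rewrite /be /al /= (linD lQ) (linB lQ) !QS subrr addr0 -surjective_pairing JK.
  by rewrite [S (J (Q x)).2 + _]addrC addrK addrC subrK.
have albe p : al (be p) = p.
  case: p => c d; rewrite /be /al /= (linD lQ) (linB lQ) !QS subrr addr0 KJ /=.
  by rewrite [S (K _) + _]addrC addrK addrC subrK.
have alA x : al (A x) = (- A (al x).1, A (al x).2).
  rewrite /al QA /opp_op (linN lJ) JA /=; congr (_, _).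
  by rewrite !(linN lS) !SA !opprK (linD lA) (linB lA).
have beA c d : be (A c, - A d) = - A (be (c, d)).
  rewrite /be /= (linN lQ) QA /opp_op opprK (K_op_sum (c, Q d)) SA (linD lA) (linB lA) SA.
  by rewrite opprD opprB opprK [- A d + _]addrC.
exists T; split; last by exists T => x; rewrite /T albe /= beal.
split => [|x]; last by rewrite /T alA /=; exact: beA.
have bJQ : bounded_lin (J \o Q) := bounded_lin_comp bQ bJ.
have bal : bounded_lin al.
  apply: bounded_lin_pair; first exact: bounded_lin_comp bJQ (@bounded_lin_fst _ X X).
  apply: bounded_linD.
    exact: bounded_lin_comp (bounded_lin_comp bJQ (@bounded_lin_snd _ X X)) bS.
  exact: bounded_linB (@bounded_lin_id _ X) (bounded_lin_comp bQ bS).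
have bbe : bounded_lin be.
  apply: bounded_linD.
    apply: bounded_lin_comp (bounded_lin_comp bK bS).
    apply: bounded_lin_pair (@bounded_lin_fst _ X X) _.
    exact: bounded_lin_comp (@bounded_lin_snd _ X X) bQ.
  apply: bounded_linB (@bounded_lin_snd _ X X) _.
  exact: bounded_lin_comp (@bounded_lin_snd _ X X) (bounded_lin_comp bQ bS).
apply: bounded_lin_comp bbe.
exact: bounded_lin_comp (bounded_lin_pair (@bounded_lin_snd _ X X) (@bounded_lin_fst _ X X)).
Qed.

Lemma factor_class_not_self_conjugate :
  ~ cplx_iso A (opp_op A) -> ~ self_conjugate (factor_class A).
Proof.
move=> niso sc; apply: niso.
have : factor_class A A A id by split => //; exists id, id; split => //; exact: bounded_lin_id.
move=> /(sc X X A A id).1 [_ _ [S [Q [bS bQ SA QA SQ]]]].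
by apply: (pelczynski bS bQ SA QA) => x; rewrite -[RHS]/(id x) SQ.
Qed.

End sum_iso.
End factor_class.

Theorem proposition6 (R : realType) (X : completeNormedModType R) (A : X -> X) :
  is_iop A ->
  ~ cplx_iso A (opp_op A) ->
  cplx_iso A (op_sum A) ->
  is_cplx_op_ideal (factor_class A) /\ ~ self_conjugate (factor_class A).
Proof.
move=> iA niso [J [[bJ JA] [K JK KJ]]].
have bK := bounded_inverse bJ JK KJ.
split.
- exact: (factor_class_is_ideal iA bJ bK JA JK KJ (exists_nonzero_of_not_cplx_iso_opp niso)).
- exact: (factor_class_not_self_conjugate iA bJ bK JA JK KJ niso).
Qed.
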